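(* The pair $\langle \alpha^{\mathsf{v}}, \gamma^{\mathsf{v}}\rangle$ forms a Galois connection between the concrete domain $\mathcal{C}$ and the view domain $\mathcal{A}^{\mathsf{v}}$.
   Context: Setting (heap programs): $\mathit{Var}=\mathit{Var}_p\uplus\mathit{Var}_d$ are pointer/data program variables, $\mathit{Fld}=\mathit{Fld}_p\uplus\mathit{Fld}_d$ pointer/data fields, $\mathit{Addr}$ a set of addresses containing $\mathsf{null}$, $\mathit{Val}=\mathit{Addr}\uplus\mathbb{Z}$, $\mathit{Loc}$ a finite set of control locations. A stack $s:\mathit{Var}\to\mathit{Val}$ is safe if $s(\mathit{Var}_p)\subseteq\mathit{Addr}$ and $s(\mathit{Var}_d)\subseteq\mathbb{Z}$. A heap is a partial map $h:\mathit{Addr}\rightharpoonup\mathit{FldVal}$ with $\mathit{FldVal}=(\mathit{Fld}\uplus\{\mathsf{free}\})\to\mathit{Val}$; it is safe if for all $a\in\mathrm{dom}(h)$, $h(a)(\mathit{Fld}_p)\subseteq\mathit{Addr}\cap\mathrm{dom}(h)$ and $h(a)(\mathit{Fld}_d\uplus\{\mathsf{free}\})\subseteq\mathbb{Z}$; $\mathit{Heap}$ is the set of safe heaps. A state is $\langle\ell,\langle s,h\rangle\rangle$ with $\ell\in\mathit{Loc}$, $s$ a safe stack, $h$ a safe heap and $\mathrm{rng}(s)\cap\mathit{Addr}\subseteq\mathrm{dom}(h)$; $\mathit{State}$ is the set of states. The concrete domain is $\mathcal{C}=\mathcal{P}(\mathit{State})\cup\{\top\}$ ordered by $X\sqsubseteq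 Y$ iff ($X,Y$ are sets and $X\subseteq Y$) or $Y=\top$. View abstraction: the view states are $\mathit{State}^{\mathsf{v}}=\mathit{Loc}\times\{\top\}\cup\{\langle\ell,\langle s,h\rangle\rangle \mid \mathrm{dom}(h)=s(\mathit{Var}_p)\}$ (the view heap $h$ may point outside its domain, so need not be safe). The abstract domain is $\mathcal{A}^{\mathsf{v}}=(\mathcal{P}(\mathit{State}^{\mathsf{v}})\times\mathcal{P}(\mathit{Addr}\times\mathit{FldVal}))\cup\{\top\}$, ordered by componentwise subset inclusion with $\top$ as top element; it is a complete lattice. For a view heap $h$ and $H\subseteq\mathit{Addr}\times\mathit{FldVal}$ (the space invariant), the completion $H\triangleright h$ is the set of safe heaps $h'$ with $h'=h\uplus h''$ for some $h''\in\mathit{Heap}$ whose graph is contained in $H$. The concretization is $\gamma^{\mathsf{v}}(\Sigma,H)=\{\langle\ell,\langle s,h'\rangle\rangle \mid \langle\ell,\langle s,h\rangle\rangle\in\Sigma \wedge h'\in H\triangleright h\}$ and $\gamma^{\mathsf{v}}(\top)=\top$. The abstraction $\alpha^{\mathsf{v}}:\mathcal{C}\to\mathcal{A}^{\mathsf{v}}$ is defined as $\alpha^{\mathsf{v}}(\Sigma)=$ the greatest lower bound (meet) in $\mathcal{A}^{\mathsf{v}}$ of the set $\{V\in\mathcal{A}^{\mathsf{v}} \mid \Sigma\sqsubseteq\gamma^{\mathsf{v}}(V)\}$. *)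

From Stdlib Require Import ZArith List FinFun ClassicalEpsilon.
Set Implicit Arguments.

(** The standing setting: Var = Var_p ⊎ Var_d (ptrVar x = true iff x ∈ Var_p),
    Fld = Fld_p ⊎ Fld_d (ptrFld f = true iff f ∈ Fld_p), Addr ∋ null,
    Loc a finite set of control locations. *)
Record Setting := {
  Var : Type; ptrVar : Var -> bool;
  Fld : Type; ptrFld : Fld -> bool;
  Addr : Type; null : Addr;
  Loc : Type; Loc_finite : Finite Loc }.

Section Heaps.
Variable S : Setting.

Definition Val : Type := (Addr S + Z)%type.
Definition isAddr (v : Val) : Prop := match v with inl _ => True | inr _ => False end.
Definition isInt (v : Val) : Prop := match v with inl _ => False | inr _ => True end.

(** FldVal = (Fld ⊎ {free}) -> Val; [None] stands for the extra field [free]. *)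
Definition FldVal : Type := option (Fld S) -> Val.
Definition Stack : Type := Var S -> Val.
Definition PHeap : Type := Addr S -> option FldVal.
Definition dom (h : PHeap) (a : Addr S) : Prop := h a <> None.

Definition safe_stack (s : Stack) : Prop :=
  forall x, if ptrVar S x then isAddr (s x) else isInt (s x).

Definition safe_heap (h : PHeap) : Prop :=
  forall a fv, h a = Some fv ->
    (forall f, ptrFld S f = true ->
        match fv (Some f) with inl a' => dom h a' | inr _ => False end) /\
    (forall f, ptrFld S f = false -> isInt (fv (Some f))) /\
    isInt (fv None).

Definition isState (st : Loc S * (Stack * PHeap)) : Prop :=
  let '(l, (s, h)) := st in
  safe_stack s /\ safe_heap h /\ (forall x a, s x = inl a -> dom h a).

Definition State : Type := { st : Loc S * (Stack * PHeap) | isState st }.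

(** concrete domain C = P(State) ∪ {⊤}; [None] is ⊤ *)
Definition Conc : Type := option (State -> Prop).
Definition leC (X Y : Conc) : Prop :=
  match Y with
  | None => True
  | Some y => match X with None => False | Some x => forall st, x st -> y st end
  end.

(** view states: Loc × {⊤} ∪ {⟨ℓ,⟨s,h⟩⟩ | dom(h) = s(Var_p)} *)
Inductive VRaw : Type :=
| VTop : Loc S -> VRaw
| VSt : Loc S -> Stack -> PHeap -> VRaw.

Definition isViewState (v : VRaw) : Prop :=
  match v with
  | VTop _ => True
  | VSt _ s h =>
      (* dom(h) = s(Var_p), as subsets of Val *)
      forall v : Val, (exists a, v = inl a /\ dom h a) <->
                      (exists x, ptrVar S x = true /\ s x = v)
  end.

Definition ViewState : Type := { v : VRaw | isViewState v }.

(** A^v = (P(State^v) × P(Addr × FldVal)) ∪ {⊤}; [None] is ⊤ *)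
Definition AV : Type := option ((ViewState -> Prop) * (Addr S * FldVal -> Prop)).
Definition leA (V W : AV) : Prop :=
  match W with
  | None => True
  | Some (Sg2, H2) =>
      match V with
      | None => False
      | Some (Sg1, H1) => (forall v, Sg1 v -> Sg2 v) /\ (forall p, H1 p -> H2 p)
      end
  end.

(** completion H ▷ h : safe heaps h' = h ⊎ h'' with h'' ∈ Heap and graph(h'') ⊆ H *)
Definition completion (H : Addr S * FldVal -> Prop) (h h' : PHeap) : Prop :=
  safe_heap h' /\
  exists h'' : PHeap,
    safe_heap h'' /\
    (forall a fv, h'' a = Some fv -> H (a, fv)) /\
    (forall a, dom h a -> h'' a = None) /\
    (forall a, h' a = match h a with Some fv => Some fv | None => h'' a end).

Definition gammaV (V : AV) : Conc :=
  match V with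
  | None => None
  | Some (Sg, H) =>
      Some (fun st : State =>
        let '(l, (s, h')) := proj1_sig st in
        exists (vs : ViewState) (h : PHeap),
          proj1_sig vs = VSt l s h /\ Sg vs /\ completion H h h')
  end.

Definition meetA (P : AV -> Prop) : AV :=
  if excluded_middle_informative (exists p, P (Some p)) then
    Some ((fun v => forall p, P (Some p) -> fst p v),
          (fun x => forall p, P (Some p) -> snd p x))
  else None.

Definition alphaV (X : Conc) : AV := meetA (fun V => leC X (gammaV V)).

End Heaps.

Definition galois_connection {A B : Type} (leA' : A -> A -> Prop) (leB' : B -> B -> Prop)
  (alpha : A -> B) (gamma : B -> A) : Prop :=
  forall (a : A) (b : B), leB' (alpha a) b <-> leA' a (gamma b).

From Stdlib Require Import ZArith List FinFun ClassicalEpsilon.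
From Stdlib Require Import FunctionalExtensionality ProofIrrelevance.

(** Since [alphaV X] is by definition the meet of all [V] with [X ⊑ gammaV V],
    the connection reduces to showing that [gammaV] is monotone and preserves
    these meets.  The latter holds because a concrete state splits in at most
    one way into a view state and a completion: the view heap must be the
    restriction of the concrete heap to the addresses held by pointer
    variables, and the rest of the heap is then fixed as well.  Hence a state
    lying in every [gammaV (Sg, H)] of the family has the same view in every
    [Sg] and its remaining cells lie in every [H]. *)

Set Implicit Arguments.
Unset Strict Implicit.

Lemma galois_connection_of_extensive {A B : Type}
    (leX : A -> A -> Prop) (leY : B -> B -> Prop) (alpha : A -> B) (gamma : B -> A) :
  (forall a1 a2 a3, leX a1 a2 -> leX a2 a3 -> leX a1 a3) ->
  (forall b1 b2, leY b1 b2 -> leX (gamma b1) (gamma b2)) ->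
  (forall a, leX a (gamma (alpha a))) ->
  (forall a b, leX a (gamma b) -> leY (alpha a) b) ->
  galois_connection leX leY alpha gamma.
Proof.
  intros trans mono extensive lower a b; split; [|apply lower].
  intro le_ab. exact (trans _ _ _ (extensive a) (mono _ _ le_ab)).
Qed.

Section ViewAbstraction.
Variable S : Setting.

Lemma leC_trans (X Y Z : Conc S) : leC X Y -> leC Y Z -> leC X Z.
Proof.
  destruct Z as [z|]; [|intros; exact I].
  destruct Y as [y|]; [|contradiction].
  destruct X as [x|]; simpl; auto.
Qed.

Lemma meetA_lower (P : AV S -> Prop) (V : AV S) : P V -> leA (meetA P) V.
Proof.
  intro PV. destruct V as [[Sg H]|]; [|exact I].
  unfold meetA. destruct excluded_middle_informative as [_|none].
  - split; intros v Hv; exact (Hv (Sg, H) PV).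
  - apply none. now exists (Sg, H).
Qed.

Lemma completion_mono (H1 H2 : Addr S * FldVal S -> Prop) (h h' : PHeap S) :
  (forall p, H1 p -> H2 p) -> completion H1 h h' -> completion H2 h h'.
Proof.
  intros H12 [safe [rest [safe_rest [in_H1 [disj def]]]]].
  split; [exact safe|]. exists rest.
  refine (conj safe_rest (conj _ (conj disj def))).
  intros a fv rest_a. exact (H12 _ (in_H1 a fv rest_a)).
Qed.

Lemma gammaV_mono (V W : AV S) : leA V W -> leC (gammaV V) (gammaV W).
Proof.
  destruct W as [[Sg2 H2]|]; [|intros; exact I].
  destruct V as [[Sg1 H1]|]; [|contradiction].
  intros [Sg12 H12] [[l [s h']] st]; simpl.
  intros (vs & h & E & Sg_vs & C).
  exists vs, h. split; [exact E|]. split; [auto|].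
  exact (completion_mono H12 C).
Qed.

Lemma completion_on_dom (H : Addr S * FldVal S -> Prop) (h h' : PHeap S) a fv :
  completion H h h' -> h a = Some fv -> h' a = Some fv.
Proof.
  intros [_ [rest [_ [_ [_ def]]]]] ha. now rewrite def, ha.
Qed.

Lemma completion_off_dom (H : Addr S * FldVal S -> Prop) (h h' : PHeap S) a fv :
  completion H h h' -> h a = None -> h' a = Some fv -> H (a, fv).
Proof.
  intros [_ [rest [_ [in_H [_ def]]]]] ha h'a.
  apply in_H. now rewrite <- h'a, def, ha.
Qed.

Lemma view_dom_sub (l : Loc S) (s : Stack S) (h1 h2 : PHeap S) :
  isViewState (VSt l s h1) -> isViewState (VSt l s h2) ->
  forall a, dom h1 a -> dom h2 a.
Proof.
  simpl. intros view1 view2 a dom1.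
  destruct (proj1 (view1 (inl a)) (ex_intro _ a (conj eq_refl dom1))) as [x var_x].
  destruct (proj2 (view2 (inl a)) (ex_intro _ x var_x)) as [b [Eb dom2]].
  now injection Eb as ->.
Qed.

Lemma completion_same_dom (H1 H2 : Addr S * FldVal S -> Prop) (h1 h2 h' : PHeap S) :
  completion H1 h1 h' -> completion H2 h2 h' ->
  (forall a, dom h1 a <-> dom h2 a) -> h1 = h2.
Proof.
  intros C1 C2 same_dom. extensionality a.
  destruct (h1 a) as [fv1|] eqn:E1, (h2 a) as [fv2|] eqn:E2; auto.
  - pose proof (completion_on_dom C1 E1). pose proof (completion_on_dom C2 E2).
    congruence.
  - exfalso. apply (proj1 (same_dom a)); [congruence | exact E2].
  - exfalso. apply (proj2 (same_dom a)); [congruence | exact E1].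
Qed.

Lemma view_decomposition_unique (vs1 vs2 : ViewState S) l s (h1 h2 h' : PHeap S) H1 H2 :
  proj1_sig vs1 = VSt l s h1 -> proj1_sig vs2 = VSt l s h2 ->
  completion H1 h1 h' -> completion H2 h2 h' -> vs1 = vs2 /\ h1 = h2.
Proof.
  destruct vs1 as [r1 view1], vs2 as [r2 view2]; simpl.
  intros -> -> C1 C2.
  assert (h12 : h1 = h2).
  { apply (completion_same_dom C1 C2). intro a. split.
    - apply (view_dom_sub view1 view2).
    - apply (view_dom_sub view2 view1). }
  subst h2. split; [apply subset_eq_compat|]; reflexivity.
Qed.

Lemma gammaV_meetA (P : AV S -> Prop) (X : Conc S) :
  (forall V, P V -> leC X (gammaV V)) -> leC X (gammaV (meetA P)).
Proof.
  intro below. unfold meetA.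
  destruct excluded_middle_informative as [[[Sg0 H0] P0]|_]; [|exact I].
  destruct X as [x|]; [|exact (below _ P0)].
  intros [[l [s h']] st] x_st; simpl.
  assert (view_of : forall Sg H, P (Some (Sg, H)) -> exists (vs : ViewState S) h,
             proj1_sig vs = VSt l s h /\ Sg vs /\ completion H h h').
  { intros Sg H PV. exact (below _ PV _ x_st). }
  destruct (view_of _ _ P0) as (vs0 & h0 & E0 & _ & C0).
  assert (common : forall Sg H, P (Some (Sg, H)) -> Sg vs0 /\ completion H h0 h').
  { intros Sg H PV.
    destruct (view_of _ _ PV) as (vs & h & E & Sg_vs & C).
    destruct (view_decomposition_unique E E0 C C0) as [-> ->]. now split. }
  exists vs0, h0. split; [exact E0|]. split.
  - intros [Sg H] PV. exact (proj1 (common _ _ PV)).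
  - destruct C0 as [safe [rest [safe_rest [_ [disj def]]]]].
    split; [exact safe|]. exists rest.
    refine (conj safe_rest (conj _ (conj disj def))).
    intros a fv rest_a [Sg H] PV; simpl.
    assert (h0_a : h0 a = None).
    { destruct (h0 a) eqn:E; [|reflexivity].
      rewrite disj in rest_a; [discriminate | unfold dom; congruence]. }
    apply (completion_off_dom (proj2 (common _ _ PV)) h0_a).
    now rewrite def, h0_a.
Qed.

End ViewAbstraction.

Theorem proposition4p1 (S : Setting) :
  galois_connection (@leC S) (@leA S) (@alphaV S) (@gammaV S).
Proof.
  apply galois_connection_of_extensive.
  - apply leC_trans.
  - apply gammaV_mono.
  - intro X. unfold alphaV. apply gammaV_meetA. trivial.
  - intros X V le_XV. unfold alphaV. now apply meetA_lower.
Qed.
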